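(* Let $G$ be a finite simple graph and $L_G$ its holonomy Lie algebra. Let $v$ be a vertex of $G$, let $V$ be the set of edges of $G$ incident to $v$, let $K$ be the set of edges of $G$ both of whose endpoints are neighbours of $v$, and let $G_2$ be the graph with edge set $E(G)\setminus V$. Let $\pi:L_G\to L_{G_2}$ be the (well-defined) Lie homomorphism sending each edge in $V$ to $0$ and each other edge to itself. If $K$ is complete (i.e. any two distinct neighbours of $v$ are joined by an edge of $G$), then $\ker\pi$ is a free Lie algebra freely generated by the (images of the) edges in $V$.
   Context: All Lie algebras are over a fixed field. A triangle in a graph is a set of three edges forming a cycle of length 3. For a finite simple graph $G$ with edge set $E(G)$, the holonomy Lie algebra $L_G$ is the free Lie algebra on $E(G)$ modulo the relations $[x,y]=0$ for every pair of distinct edges $x,y$ not contained in a common triangle, and $[a,b]=[b,c]=[c,a]$ for every triangle $\{a,b,c\}$. $L_{G_2}$ is defined in the same way for the graph $G_2$. *)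

From HB Require Import structures.
From mathcomp Require Import all_boot all_order all_algebra.
Set Implicit Arguments. Unset Strict Implicit. Unset Printing Implicit Defensive.
Import GRing.Theory.
Local Open Scope ring_scope.

Record lieAlgebra (K : fieldType) := LieAlgebra {
  lie_carrier :> lmodType K;
  lie_br : lie_carrier -> lie_carrier -> lie_carrier;
  lie_brDl : forall (a : K) (x y z : lie_carrier),
      lie_br (a *: x + y) z = a *: lie_br x z + lie_br y z;
  lie_brDr : forall (a : K) (x y z : lie_carrier),
      lie_br z (a *: x + y) = a *: lie_br z x + lie_br z y;
  lie_br_alt : forall x : lie_carrier, lie_br x x = 0;
  lie_jacobi : forall x y z : lie_carrier,
      lie_br x (lie_br y z) + lie_br y (lie_br z x) + lie_br z (lie_br x y) = 0
}.

Section Defs.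
Variable K : fieldType.

Definition lie_hom (L M : lieAlgebra K) (f : L -> M) : Prop :=
  (forall (a : K) (x y : L), f (a *: x + y) = a *: f x + f y) /\
  (forall x y : L, f (lie_br x y) = lie_br (f x) (f y)).

Variable T : finType.

Definition is_triangle (E : {set {set T}}) (a b c : {set T}) : Prop :=
  exists p q r : T, [&& p != q, q != r & r != p] /\
    a = [set p; q] /\ b = [set q; r] /\ c = [set r; p] /\
    a \in E /\ b \in E /\ c \in E.

Definition holonomy_rel (E : {set {set T}}) (L : lieAlgebra K)
    (x : {set T} -> L) : Prop :=
  (forall a b, a \in E -> b \in E -> a != b ->
      ~ (exists c, is_triangle E a b c) -> lie_br (x a) (x b) = 0) /\
  (forall a b c, is_triangle E a b c ->
      lie_br (x a) (x b) = lie_br (x b) (x c) /\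
      lie_br (x b) (x c) = lie_br (x c) (x a)).

(* (L, iota) is the holonomy Lie algebra of the graph with edge set E:
   the Lie algebra presented by generators E and the holonomy relations,
   i.e. it satisfies the universal property of that presentation. *)
Definition is_holonomy (E : {set {set T}}) (L : lieAlgebra K)
    (iota : {set T} -> L) : Prop :=
  holonomy_rel E iota /\
  forall (M : lieAlgebra K) (f : {set T} -> M), holonomy_rel E f ->
    exists h : L -> M, [/\ lie_hom h,
      (forall e, e \in E -> h (iota e) = f e) &
      (forall h' : L -> M, lie_hom h' ->
         (forall e, e \in E -> h' (iota e) = f e) -> forall y, h' y = h y)].

Definition lie_hom_on (L M : lieAlgebra K) (S : L -> Prop) (h : L -> M) : Prop :=
  forall (a : K) (x y : L), S x -> S y ->
    h (a *: x + y) = a *: h x + h y /\ h (lie_br x y) = lie_br (h x) (h y).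

(* S is a Lie subalgebra of L, and as a Lie algebra it is free, freely
   generated by the family (g i)_{i in I} (universal property). *)
Definition free_on (L : lieAlgebra K) (S : L -> Prop) (I : {set {set T}})
    (g : {set T} -> L) : Prop :=
  [/\ S 0,
      (forall (a : K) x y, S x -> S y -> S (a *: x + y)),
      (forall x y, S x -> S y -> S (lie_br x y)),
      (forall i, i \in I -> S (g i)) &
      forall (M : lieAlgebra K) (f : {set T} -> M),
        exists h : L -> M, [/\ lie_hom_on S h,
          (forall i, i \in I -> h (g i) = f i) &
          (forall h' : L -> M, lie_hom_on S h' ->
             (forall i, i \in I -> h' (g i) = f i) ->
             forall y, S y -> h' y = h y)]].

(* graph given by its edge set E (2-element subsets of T) *)
Definition incident (E : {set {set T}}) (v : T) : {set {set T}} :=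
  [set e in E | v \in e].
Definition neighbours (E : {set {set T}}) (v : T) : {set T} :=
  [set w | [set v; w] \in E].
Definition link_edges (E : {set {set T}}) (v : T) : {set {set T}} :=
  [set e in E | e \subset neighbours E v].
Definition link_complete (E : {set {set T}}) (v : T) : Prop :=
  forall w1 w2, w1 \in neighbours E v -> w2 \in neighbours E v -> w1 != w2 ->
    [set w1; w2] \in link_edges E v.

End Defs.

(* Let [F] be the free Lie algebra on the vertices, [X w] standing for the
   edge [vw] (generators [X w] with [w] not adjacent to [v] are sent to 0).
   An edge [e] of [G_2] acts on [F] by the derivation [D_e] mirroring
   [ad x_e] on the [x_vw]; because the neighbours of [v] span a complete
   graph, [e |-> D_e] satisfies the holonomy relations of [G_2] and yields
   [rho : L_{G_2} -> Der F].  In the semidirect product [F ⋊ L_{G_2}] the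
   elements [(X w, 0)] and [(0, x_e)] satisfy the holonomy relations of [G],
   which gives [phi : L_G -> F ⋊ L_{G_2}]; conversely [(a, y) |-> j a + s y]
   is a homomorphism, where [j (X w) = x_vw] and [s] is the section
   [x_e |-> x_e].  It is a left inverse of [phi], and the second component
   of [phi] is [pi], so the kernel of [pi] is the image of [F] under [j]
   and inherits the universal property of [F]. *)

From HB Require Import structures.
From mathcomp Require Import all_boot all_order all_algebra.
From mathcomp Require Import boolp.
From Stdlib Require Import ClassicalEpsilon ProofIrrelevance.
Set Implicit Arguments. Unset Strict Implicit. Unset Printing Implicit Defensive.
Import GRing.Theory.
Local Open Scope ring_scope.

Section GroupCancellation.
Variable M : zmodType.
Implicit Types a r s t x y : M.

Lemma pull_head t r : t + r = t + r. Proof. by []. Qed.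
Lemma pull_last t : t = t + 0. Proof. by rewrite addr0. Qed.
Lemma pull_tail x t r s : r = t + s -> x + r = t + (x + s).
Proof. by move=> ->; rewrite addrCA. Qed.
Lemma cancel_head a r s : r = - a + s -> s = 0 -> a + r = 0.
Proof. by move=> -> ->; rewrite addr0 subrr. Qed.
Lemma cancel_head_opp a r s : r = a + s -> s = 0 -> - a + r = 0.
Proof. by move=> -> ->; rewrite addr0 addNr. Qed.
Lemma subr0_eq x y : x - y = 0 -> x = y.
Proof. by move/eqP; rewrite subr_eq0 => /eqP. Qed.

End GroupCancellation.

(* [zmod_cancel] proves an identity in an abelian group that holds after
   moving everything to the left and cancelling each summand against a
   syntactically equal opposite. *)
Ltac pull t :=
  lazymatch goal with
  | |- ?x + ?r = _ => first [ unify x t; apply: pull_head | eapply pull_tail; pull t ]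
  | |- ?x = _ => unify x t; apply: pull_last
  end.

Ltac cancel_all :=
  lazymatch goal with
  | |- 0 = 0 => reflexivity
  | |- - ?a + ?r = 0 => eapply cancel_head_opp; [pull a | cancel_all]
  | |- ?a + ?r = 0 => eapply cancel_head; [pull (- a) | cancel_all]
  end.

Ltac zmod_cancel :=
  apply: subr0_eq; rewrite ?opprD ?opprK ?oppr0 ?addr0 ?add0r -?addrA; cancel_all.

Section LieBracket.
Variables (K : fieldType) (L : lieAlgebra K).
Implicit Types x y z : L.

Lemma brDl x y z : lie_br (x + y) z = lie_br x z + lie_br y z.
Proof. by have := lie_brDl 1 x y z; rewrite !scale1r. Qed.
Lemma brDr x y z : lie_br z (x + y) = lie_br z x + lie_br z y.
Proof. by have := lie_brDr 1 x y z; rewrite !scale1r. Qed.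
Lemma br0l z : lie_br 0 z = 0.
Proof. by apply: (addrI (lie_br 0 z)); rewrite -brDl !addr0. Qed.
Lemma br0r z : lie_br z 0 = 0.
Proof. by apply: (addrI (lie_br z 0)); rewrite -brDr !addr0. Qed.
Lemma brZl a x z : lie_br (a *: x) z = a *: lie_br x z.
Proof. by have := lie_brDl a x 0 z; rewrite !addr0 br0l addr0. Qed.
Lemma brZr a x z : lie_br z (a *: x) = a *: lie_br z x.
Proof. by have := lie_brDr a x 0 z; rewrite !addr0 br0r addr0. Qed.
Lemma brNl x z : lie_br (- x) z = - lie_br x z.
Proof. by rewrite -scaleN1r brZl scaleN1r. Qed.
Lemma brNr x z : lie_br z (- x) = - lie_br z x.
Proof. by rewrite -scaleN1r brZr scaleN1r. Qed.
Lemma brBl x y z : lie_br (x - y) z = lie_br x z - lie_br y z.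
Proof. by rewrite brDl brNl. Qed.
Lemma brBr x y z : lie_br z (x - y) = lie_br z x - lie_br z y.
Proof. by rewrite brDr brNr. Qed.
Lemma brC x y : lie_br x y = - lie_br y x.
Proof.
apply/eqP; rewrite -addr_eq0.
by have := lie_br_alt (x + y); rewrite brDl !brDr !lie_br_alt add0r addr0 => ->.
Qed.

Lemma br_leibniz x y z : lie_br x (lie_br y z) = lie_br (lie_br x y) z + lie_br y (lie_br x z).
Proof.
apply: subr0_eq; rewrite -(lie_jacobi x y z).
by rewrite [lie_br z (lie_br x y)]brC [lie_br z x]brC brNr; zmod_cancel.
Qed.

End LieBracket.

Section LinearMaps.
Variables (K : fieldType) (V W : lmodType K) (h : V -> W).
Hypothesis h_lin : linear h.

Lemma lin0 : h 0 = 0.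
Proof. by apply: (addrI (h 0)); have := h_lin 1 0 0; rewrite !scale1r !addr0. Qed.
Lemma linD x y : h (x + y) = h x + h y.
Proof. by have := h_lin 1 x y; rewrite !scale1r. Qed.
Lemma linZ a x : h (a *: x) = a *: h x.
Proof. by have := h_lin a x 0; rewrite !addr0 lin0 addr0. Qed.
Lemma linN x : h (- x) = - h x.
Proof. by rewrite -scaleN1r linZ scaleN1r. Qed.
Lemma linB x y : h (x - y) = h x - h y.
Proof. by rewrite linD linN. Qed.

End LinearMaps.

Section LieHomomorphisms.
Variables (K : fieldType) (L M P : lieAlgebra K).

Lemma lie_hom0 (h : L -> M) : lie_hom h -> h 0 = 0.
Proof. by case=> /lin0. Qed.

Lemma lie_hom_comp (f : L -> M) (g : M -> P) :
  lie_hom f -> lie_hom g -> lie_hom (fun x => g (f x)).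
Proof. by move=> [f_lin f_br] [g_lin g_br]; split=> *; rewrite ?f_lin ?g_lin ?f_br ?g_br. Qed.

Lemma lie_hom_on_comp (S : M -> Prop) (j : L -> M) (h : M -> P) :
  lie_hom j -> (forall x, S (j x)) -> lie_hom_on S h -> lie_hom (fun x => h (j x)).
Proof.
move=> [j_lin j_br] Sj h_hom; split=> [a x y | x y].
  by rewrite j_lin (h_hom a _ _ (Sj x) (Sj y)).1.
by rewrite j_br (h_hom 1 _ _ (Sj x) (Sj y)).2.
Qed.

Lemma lie_hom_kernel (pi : L -> M) : lie_hom pi ->
  [/\ pi 0 = 0, forall a x y, pi x = 0 -> pi y = 0 -> pi (a *: x + y) = 0
    & forall x y, pi x = 0 -> pi y = 0 -> pi (lie_br x y) = 0].
Proof.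
move=> /[dup] /lie_hom0 pi0 [pi_lin pi_br]; split=> // [a x y | x y] px py.
  by rewrite pi_lin px py scaler0 addr0.
by rewrite pi_br px py br0l.
Qed.

End LieHomomorphisms.

Section LieSubalgebra.
Variables (K : fieldType) (L : lieAlgebra K) (S : L -> Prop).
Hypotheses (S0 : S 0) (S_lin : forall a x y, S x -> S y -> S (a *: x + y))
  (S_br : forall x y, S x -> S y -> S (lie_br x y)).

Record sub_lie := SubLie { sub_val : L; sub_valP : S sub_val }.

Lemma sub_val_inj : injective sub_val.
Proof.
case=> x Sx [y Sy] /= exy; subst y.
by rewrite (proof_irrelevance _ Sx Sy).
Qed.

HB.instance Definition _ := gen_eqMixin sub_lie.
HB.instance Definition _ := gen_choiceMixin sub_lie.

Lemma S_add x y : S x -> S y -> S (x + y).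
Proof. by move=> Sx Sy; have := S_lin 1 Sx Sy; rewrite scale1r. Qed.
Lemma S_scale a x : S x -> S (a *: x).
Proof. by move=> Sx; have := S_lin a Sx S0; rewrite addr0. Qed.
Lemma S_opp x : S x -> S (- x).
Proof. by move=> Sx; rewrite -scaleN1r; apply: S_scale. Qed.

Definition sub_zero := SubLie S0.
Definition sub_opp u := SubLie (S_opp (sub_valP u)).
Definition sub_add u w := SubLie (S_add (sub_valP u) (sub_valP w)).
Definition sub_scale a u := SubLie (S_scale a (sub_valP u)).
Definition sub_br u w := SubLie (S_br (sub_valP u) (sub_valP w)).

Lemma sub_addA : associative sub_add.
Proof. by move=> u w z; apply: sub_val_inj; rewrite /= addrA. Qed.
Lemma sub_addC : commutative sub_add.
Proof. by move=> u w; apply: sub_val_inj; rewrite /= addrC. Qed.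
Lemma sub_add0 : left_id sub_zero sub_add.
Proof. by move=> u; apply: sub_val_inj; rewrite /= add0r. Qed.
Lemma sub_addN : left_inverse sub_zero sub_opp sub_add.
Proof. by move=> u; apply: sub_val_inj; rewrite /= addNr. Qed.
HB.instance Definition _ :=
  GRing.isZmodule.Build sub_lie sub_addA sub_addC sub_add0 sub_addN.

Lemma sub_scaleA a b u : sub_scale a (sub_scale b u) = sub_scale (a * b) u.
Proof. by apply: sub_val_inj; rewrite /= scalerA. Qed.
Lemma sub_scale1 : left_id 1 sub_scale.
Proof. by move=> u; apply: sub_val_inj; rewrite /= scale1r. Qed.
Lemma sub_scaleDr : right_distributive sub_scale +%R.
Proof. by move=> a u w; apply: sub_val_inj; rewrite /= scalerDr. Qed.
Lemma sub_scaleDl u : {morph sub_scale^~ u : a b / a + b}.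
Proof. by move=> a b; apply: sub_val_inj; rewrite /= scalerDl. Qed.
HB.instance Definition _ := GRing.Zmodule_isLmodule.Build K sub_lie
  sub_scaleA sub_scale1 sub_scaleDr sub_scaleDl.

Lemma sub_brDl a (u w z : sub_lie) : sub_br (a *: u + w) z = a *: sub_br u z + sub_br w z.
Proof. by apply: sub_val_inj; rewrite /= lie_brDl. Qed.
Lemma sub_brDr a (u w z : sub_lie) : sub_br z (a *: u + w) = a *: sub_br z u + sub_br z w.
Proof. by apply: sub_val_inj; rewrite /= lie_brDr. Qed.
Lemma sub_br_alt (u : sub_lie) : sub_br u u = 0.
Proof. by apply: sub_val_inj; rewrite /= lie_br_alt. Qed.
Lemma sub_jacobi (u w z : sub_lie) :
  sub_br u (sub_br w z) + sub_br w (sub_br z u) + sub_br z (sub_br u w) = 0.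
Proof. by apply: sub_val_inj; rewrite /= lie_jacobi. Qed.

Definition sub_lieAlgebra : lieAlgebra K :=
  LieAlgebra sub_brDl sub_brDr sub_br_alt sub_jacobi.

End LieSubalgebra.

Section HolonomyLieAlgebra.
Variables (K : fieldType) (T : finType) (E : {set {set T}}).

Lemma triangle_edges a b c : is_triangle E a b c -> [/\ a \in E, b \in E & c \in E].
Proof. by case=> p [q [r [_ [_ [_ [_ [aE [bE cE]]]]]]]]. Qed.

Lemma holonomy_rel_hom (L M : lieAlgebra K) (x : {set T} -> L) (h : L -> M) :
  lie_hom h -> holonomy_rel E x -> holonomy_rel E (fun e => h (x e)).
Proof.
move=> [h_lin h_br] [x_comm x_tri]; split.
  by move=> a b aE bE ab nt; rewrite -h_br x_comm // lin0.
by move=> a b c tri; have [e1 e2] := x_tri a b c tri; rewrite -!h_br e1 e2.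
Qed.

Variables (L : lieAlgebra K) (iota : {set T} -> L).
Hypothesis hL : is_holonomy E iota.

Lemma holonomy_hom_eq (M : lieAlgebra K) (h1 h2 : L -> M) :
  lie_hom h1 -> lie_hom h2 -> {in E, forall e, h1 (iota e) = h2 (iota e)} -> h1 =1 h2.
Proof.
move=> h1_hom h2_hom h12.
have [h [_ _ h_uniq]] := hL.2 M _ (holonomy_rel_hom h1_hom hL.1).
move=> y; rewrite (h_uniq h1 h1_hom (fun _ _ => erefl) y).
by rewrite (h_uniq h2 h2_hom _ y) // => e /h12 ->.
Qed.

Lemma holonomy_ind (P : L -> Prop) :
  P 0 -> (forall a x y, P x -> P y -> P (a *: x + y)) ->
  (forall x y, P x -> P y -> P (lie_br x y)) ->
  {in E, forall e, P (iota e)} -> forall y, P y.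
Proof.
move=> P0 P_lin P_br P_iota.
pose S := sub_lieAlgebra P0 P_lin P_br.
have P_gen e : P (if e \in E then iota e else 0) by case: ifP => [/P_iota|].
pose g e : S := SubLie (P_gen e).
have g_rel : holonomy_rel E g.
  split=> [a b aE bE ab nt | a b c /[dup] /triangle_edges [aE bE cE] tri].
    by apply: sub_val_inj; rewrite /= aE bE hL.1.1.
  by have [e1 e2] := hL.1.2 a b c tri; split; apply: sub_val_inj; rewrite /= aE bE cE.
have [h [[h_lin h_br] h_gen _]] := hL.2 S g g_rel.
have val_h : forall y, sub_val (h y) = y.
  apply: (holonomy_hom_eq (h1 := fun y => sub_val (h y))) => //.
  - by split=> [a x y | x y]; rewrite ?h_lin ?h_br.
  - by move=> e eE; rewrite h_gen //= eE.
by move=> y; rewrite -[y]val_h; apply: sub_valP.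
Qed.

End HolonomyLieAlgebra.

Section FreeLieAlgebra.
Variables (K : fieldType) (I : Type).

Inductive lie_term := TGen of I | TZero | TAdd of lie_term & lie_term
  | TOpp of lie_term | TScale of K & lie_term | TBr of lie_term & lie_term.

Fixpoint term_eval (M : lieAlgebra K) (f : I -> M) (t : lie_term) : M :=
  match t with
  | TGen i => f i
  | TZero => 0
  | TAdd t1 t2 => term_eval f t1 + term_eval f t2
  | TOpp t1 => - term_eval f t1
  | TScale a t1 => a *: term_eval f t1
  | TBr t1 t2 => lie_br (term_eval f t1) (term_eval f t2)
  end.

(* Terms are identified when they agree in every Lie algebra under every
   assignment; each class gets a representative chosen by [epsilon]. *)
Definition term_equiv (t s : lie_term) : Prop :=
  forall (M : lieAlgebra K) (f : I -> M), term_eval f t = term_eval f s.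

Definition canon (t : lie_term) : lie_term := epsilon (inhabits t) (term_equiv t).

Lemma canon_equiv t : term_equiv t (canon t).
Proof. by apply: (epsilon_spec (inhabits t) (term_equiv t)); exists t. Qed.

Lemma canon_eq t s : term_equiv t s -> canon t = canon s.
Proof.
move=> ts; rewrite /canon.
have -> : term_equiv t = term_equiv s.
  by apply: funext => u; apply: propext; split=> tu M f; rewrite ?ts // -ts.
by rewrite (proof_irrelevance _ (inhabits t) (inhabits s)).
Qed.

Lemma canon_idem t : canon (canon t) = canon t.
Proof. by apply: canon_eq => M f; rewrite -canon_equiv. Qed.

Record free_lie := FreeElt { term_of : lie_term; term_ofP : canon term_of = term_of }.

Definition free_of_term (t : lie_term) : free_lie := FreeElt (canon_idem t).

Lemma term_of_inj : injective term_of.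
Proof.
case=> t ht [s hs] /= ets; subst s.
by rewrite (proof_irrelevance _ ht hs).
Qed.

Lemma term_ofK : cancel term_of free_of_term.
Proof. by move=> x; apply: term_of_inj; rewrite /= term_ofP. Qed.

Lemma free_of_term_eq t s : term_equiv t s -> free_of_term t = free_of_term s.
Proof. by move=> ts; apply: term_of_inj; apply: canon_eq. Qed.

Lemma eval_canon (M : lieAlgebra K) (f : I -> M) t : term_eval f (canon t) = term_eval f t.
Proof. by rewrite -canon_equiv. Qed.

HB.instance Definition _ := gen_eqMixin free_lie.
HB.instance Definition _ := gen_choiceMixin free_lie.

Definition free_zero := free_of_term TZero.
Definition free_opp x := free_of_term (TOpp (term_of x)).
Definition free_add x y := free_of_term (TAdd (term_of x) (term_of y)).
Definition free_scale a x := free_of_term (TScale a (term_of x)).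
Definition free_br x y := free_of_term (TBr (term_of x) (term_of y)).

Ltac free_eq := rewrite /free_zero /free_opp /free_add /free_scale /free_br;
  apply: free_of_term_eq => M f /=; do 3 rewrite ?eval_canon /=.

Lemma free_addA : associative free_add.
Proof. by move=> x y z; free_eq; rewrite addrA. Qed.
Lemma free_addC : commutative free_add.
Proof. by move=> x y; free_eq; rewrite addrC. Qed.
Lemma free_add0 : left_id free_zero free_add.
Proof. by move=> x; rewrite -[RHS]term_ofK; free_eq; rewrite add0r. Qed.
Lemma free_addN : left_inverse free_zero free_opp free_add.
Proof. by move=> x; free_eq; rewrite addNr. Qed.
HB.instance Definition _ :=
  GRing.isZmodule.Build free_lie free_addA free_addC free_add0 free_addN.

Lemma free_scaleA a b x : free_scale a (free_scale b x) = free_scale (a * b) x.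
Proof. by free_eq; rewrite scalerA. Qed.
Lemma free_scale1 : left_id 1 free_scale.
Proof. by move=> x; rewrite -[RHS]term_ofK; free_eq; rewrite scale1r. Qed.
Lemma free_scaleDr : right_distributive free_scale +%R.
Proof. by move=> a x y; rewrite /GRing.add /=; free_eq; rewrite scalerDr. Qed.
Lemma free_scaleDl x : {morph free_scale^~ x : a b / a + b}.
Proof. by move=> a b; rewrite {2}/GRing.add /=; free_eq; rewrite scalerDl. Qed.
HB.instance Definition _ := GRing.Zmodule_isLmodule.Build K free_lie
  free_scaleA free_scale1 free_scaleDr free_scaleDl.

Lemma free_brDl a (x y z : free_lie) : free_br (a *: x + y) z = a *: free_br x z + free_br y z.
Proof. by rewrite /GRing.add /GRing.scale /=; free_eq; rewrite lie_brDl. Qed.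
Lemma free_brDr a (x y z : free_lie) : free_br z (a *: x + y) = a *: free_br z x + free_br z y.
Proof. by rewrite /GRing.add /GRing.scale /=; free_eq; rewrite lie_brDr. Qed.
Lemma free_br_alt (x : free_lie) : free_br x x = 0.
Proof. by rewrite /GRing.zero /=; free_eq; rewrite lie_br_alt. Qed.
Lemma free_jacobi (x y z : free_lie) :
  free_br x (free_br y z) + free_br y (free_br z x) + free_br z (free_br x y) = 0.
Proof. by rewrite /GRing.add /GRing.zero /=; free_eq; rewrite lie_jacobi. Qed.

Definition FreeLie : lieAlgebra K :=
  LieAlgebra free_brDl free_brDr free_br_alt free_jacobi.

Definition free_gen (i : I) : FreeLie := free_of_term (TGen i).

Definition free_eval (M : lieAlgebra K) (f : I -> M) (x : FreeLie) : M :=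
  term_eval f (term_of x).

Lemma free_eval_hom (M : lieAlgebra K) (f : I -> M) : lie_hom (free_eval f).
Proof.
split=> [a x y | x y]; rewrite /free_eval /GRing.add /GRing.scale /=;
  by do 3 rewrite ?eval_canon /=.
Qed.

Lemma free_eval_gen (M : lieAlgebra K) (f : I -> M) i : free_eval f (free_gen i) = f i.
Proof. exact: eval_canon. Qed.

Lemma free_lie_ind (P : FreeLie -> Prop) : P 0 ->
  (forall a x y, P x -> P y -> P (a *: x + y)) ->
  (forall x y, P x -> P y -> P (lie_br x y)) ->
  (forall i, P (free_gen i)) -> forall x, P x.
Proof.
move=> P0 P_lin P_br P_gen x; rewrite -(term_ofK x).
elim: (term_of x) => [i||t1 IH1 t2 IH2|t1 IH1|a t1 IH1|t1 IH1 t2 IH2].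
- exact: P_gen.
- exact: P0.
- have -> : free_of_term (TAdd t1 t2) = 1 *: free_of_term t1 + free_of_term t2 :> FreeLie.
    by rewrite scale1r /GRing.add /=; free_eq.
  exact: P_lin.
- have -> : free_of_term (TOpp t1) = (-1) *: free_of_term t1 + 0 :> FreeLie.
    by rewrite /GRing.add /GRing.scale /GRing.zero /=; free_eq; rewrite addr0 scaleN1r.
  exact: P_lin.
- have -> : free_of_term (TScale a t1) = a *: free_of_term t1 + 0 :> FreeLie.
    by rewrite /GRing.add /GRing.scale /GRing.zero /=; free_eq; rewrite addr0.
  exact: P_lin.
- have -> : free_of_term (TBr t1 t2) = lie_br (free_of_term t1 : FreeLie) (free_of_term t2).
    by rewrite /=; free_eq.
  exact: P_br.
Qed.

Lemma free_hom_eq (M : lieAlgebra K) (h1 h2 : FreeLie -> M) : lie_hom h1 -> lie_hom h2 ->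
  (forall i, h1 (free_gen i) = h2 (free_gen i)) -> h1 =1 h2.
Proof.
move=> [h1_lin h1_br] [h2_lin h2_br] h12.
elim/free_lie_ind => [|a x y e1 e2|x y e1 e2|i]; last exact: h12.
- by rewrite !lin0.
- by rewrite h1_lin h2_lin e1 e2.
- by rewrite h1_br h2_br e1 e2.
Qed.

End FreeLieAlgebra.

Lemma sum3_eq0 (M : zmodType) (s x y z : M) : s = x + y + z -> x = 0 -> y = 0 -> z = 0 -> s = 0.
Proof. by move=> -> -> -> ->; rewrite !addr0. Qed.

Section PairLmodule.
Variables (K : fieldType) (V W : lmodType K).

Lemma pairD (v v' : V) (w w' : W) : (v, w) + (v', w') = (v + v', w + w') :> V * W.
Proof. by []. Qed.
Lemma pairZ a (v : V) (w : W) : a *: ((v, w) : V * W) = (a *: v, a *: w).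
Proof. by []. Qed.

End PairLmodule.

Section DualNumbers.
Variables (K : fieldType) (L : lieAlgebra K).

(* [(x, y)] stands for [x + eps y] in [L] tensored with [K[eps]/(eps^2)]. *)
Definition dual_br (p q : L * L) : L * L :=
  (lie_br p.1 q.1, lie_br p.1 q.2 + lie_br p.2 q.1).

Lemma dual_brDl a (x y z : L * L) : dual_br (a *: x + y) z = a *: dual_br x z + dual_br y z.
Proof.
case: x y z => [x1 x2] [y1 y2] [z1 z2]; rewrite /dual_br /= ?pairZ ?pairD.
by congr (_, _); rewrite !lie_brDl // scalerDr; zmod_cancel.
Qed.
Lemma dual_brDr a (x y z : L * L) : dual_br z (a *: x + y) = a *: dual_br z x + dual_br z y.
Proof.
case: x y z => [x1 x2] [y1 y2] [z1 z2]; rewrite /dual_br /= ?pairZ ?pairD.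
by congr (_, _); rewrite !lie_brDr // scalerDr; zmod_cancel.
Qed.
Lemma dual_br_alt (x : L * L) : dual_br x x = 0.
Proof. by case: x => x1 x2; rewrite /dual_br /= lie_br_alt [lie_br x2 x1]brC subrr. Qed.
Lemma dual_jacobi (x y z : L * L) :
  dual_br x (dual_br y z) + dual_br y (dual_br z x) + dual_br z (dual_br x y) = 0.
Proof.
case: x y z => [x1 x2] [y1 y2] [z1 z2]; rewrite /dual_br /= ?pairZ ?pairD.
congr (_, _); first exact: lie_jacobi.
apply: (sum3_eq0 _ (lie_jacobi x2 y1 z1) (lie_jacobi x1 y2 z1) (lie_jacobi x1 y1 z2)).
by rewrite !brDr; zmod_cancel.
Qed.

Definition DualLie : lieAlgebra K :=
  LieAlgebra dual_brDl dual_brDr dual_br_alt dual_jacobi.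

End DualNumbers.

Section FreeDerivations.
Variables (K : fieldType) (I : finType).
Local Notation F := (FreeLie K I).
Local Notation X := (@free_gen K I).
Implicit Types (d : {ffun I -> F}) (x y : F).

(* The derivation with [X i |-> d i]: the [eps]-part of evaluating at [X i + eps d i]. *)
Definition der d x : F := (free_eval (M := DualLie F) (fun i => (X i, d i)) x).2.

Lemma der_fst d x : (free_eval (M := DualLie F) (fun i => (X i, d i)) x).1 = x.
Proof.
have [e_lin e_br] := free_eval_hom (M := DualLie F) (fun i => (X i, d i)).
elim/free_lie_ind: x => [|a x y ex ey|x y ex ey|i].
- exact: (f_equal fst (lin0 e_lin)).
- by rewrite e_lin /= ex ey.
- by rewrite e_br /= ex ey.
- by rewrite free_eval_gen.
Qed.

Lemma der_lin d : linear (der d).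
Proof. by move=> a x y; rewrite /der (free_eval_hom _).1. Qed.

Lemma der_br d x y : der d (lie_br x y) = lie_br x (der d y) + lie_br (der d x) y.
Proof. by rewrite /der (free_eval_hom _).2 /= !der_fst. Qed.

Lemma der_gen d i : der d (X i) = d i.
Proof. by rewrite /der free_eval_gen. Qed.

Lemma der_unique d (D : F -> F) : linear D ->
  (forall x y, D (lie_br x y) = lie_br x (D y) + lie_br (D x) y) ->
  (forall i, D (X i) = d i) -> D =1 der d.
Proof.
move=> D_lin D_br D_gen; elim/free_lie_ind => [|a x y ex ey|x y ex ey|i].
- by rewrite !lin0 //; apply: der_lin.
- by rewrite D_lin der_lin ex ey.
- by rewrite D_br der_br ex ey.
- by rewrite D_gen der_gen.
Qed.

Definition der_comm d1 d2 : {ffun I -> F} := [ffun i => der d1 (d2 i) - der d2 (d1 i)].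

Lemma der_commE d1 d2 i : der_comm d1 d2 i = der d1 (d2 i) - der d2 (d1 i).
Proof. exact: ffunE. Qed.

Lemma der_comm_eval d1 d2 x : der (der_comm d1 d2) x = der d1 (der d2 x) - der d2 (der d1 x).
Proof.
symmetry; apply: (der_unique (D := fun y => der d1 (der d2 y) - der d2 (der d1 y))).
- by move=> a y z; rewrite !der_lin scalerBr; zmod_cancel.
- by move=> y z; rewrite !der_br !(linD (der_lin _)) !der_br !brBl !brBr; zmod_cancel.
- by move=> i; rewrite !der_gen ffunE.
Qed.

Lemma der_linear_in a d1 d2 x : der (a *: d1 + d2) x = a *: der d1 x + der d2 x.
Proof.
symmetry; apply: (der_unique (D := fun y => a *: der d1 y + der d2 y)).
- by move=> b y z; rewrite !der_lin !scalerDr !scalerA mulrC; zmod_cancel.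
- by move=> y z; rewrite !der_br !brDl !brDr !brZl !brZr scalerDr; zmod_cancel.
- by move=> i; rewrite !der_gen !ffunE.
Qed.

Lemma der_commDl a d1 d2 d3 : der_comm (a *: d1 + d2) d3 = a *: der_comm d1 d3 + der_comm d2 d3.
Proof.
apply/ffunP => i; rewrite !ffunE der_linear_in der_lin scalerBr; zmod_cancel.
Qed.
Lemma der_commDr a d1 d2 d3 : der_comm d3 (a *: d1 + d2) = a *: der_comm d3 d1 + der_comm d3 d2.
Proof.
apply/ffunP => i; rewrite !ffunE der_linear_in der_lin scalerBr; zmod_cancel.
Qed.
Lemma der_comm_alt d : der_comm d d = 0.
Proof. by apply/ffunP => i; rewrite !ffunE subrr. Qed.
Lemma der_comm_jacobi d1 d2 d3 :
  der_comm d1 (der_comm d2 d3) + der_comm d2 (der_comm d3 d1) + der_comm d3 (der_comm d1 d2) = 0.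
Proof.
apply/ffunP => i; rewrite !ffunE !der_comm_eval !(linB (der_lin _)); zmod_cancel.
Qed.

(* Derivations of the free Lie algebra, encoded by their values on the generators. *)
Definition DerLie : lieAlgebra K :=
  LieAlgebra der_commDl der_commDr der_comm_alt der_comm_jacobi.

Lemma der_comm0l d : der_comm 0 d = 0. Proof. exact: (br0l (L := DerLie)). Qed.
Lemma der_comm0r d : der_comm d 0 = 0. Proof. exact: (br0r (L := DerLie)). Qed.
Lemma der0 x : der 0 x = 0.
Proof. exact: (lin0 (h := der^~ x) (fun a d1 d2 => der_linear_in a d1 d2 x)). Qed.

End FreeDerivations.

Section SemidirectProduct.
Variables (K : fieldType) (I : finType) (L : lieAlgebra K) (rho : L -> DerLie K I).
Hypothesis rho_hom : lie_hom rho.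
Local Notation F := (FreeLie K I).

Definition act (x : L) (b : F) : F := der (rho x) b.

Lemma act_linl a x y b : act (a *: x + y) b = a *: act x b + act y b.
Proof. by rewrite /act rho_hom.1 der_linear_in. Qed.
Lemma act_br x y b : act (lie_br x y) b = act x (act y b) - act y (act x b).
Proof. by rewrite /act rho_hom.2 /= der_comm_eval. Qed.

Definition sd_br (p q : F * L) : F * L :=
  (lie_br p.1 q.1 + act p.2 q.1 - act q.2 p.1, lie_br p.2 q.2).

Lemma sd_brDl a (x y z : F * L) : sd_br (a *: x + y) z = a *: sd_br x z + sd_br y z.
Proof.
case: x y z => [x1 x2] [y1 y2] [z1 z2]; rewrite /sd_br ?pairZ ?pairD; cbn [fst snd].
congr (_, _); last exact: lie_brDl.
by rewrite lie_brDl act_linl /act der_lin !scalerDr scalerN; zmod_cancel.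
Qed.
Lemma sd_brDr a (x y z : F * L) : sd_br z (a *: x + y) = a *: sd_br z x + sd_br z y.
Proof.
case: x y z => [x1 x2] [y1 y2] [z1 z2]; rewrite /sd_br ?pairZ ?pairD; cbn [fst snd].
congr (_, _); last exact: lie_brDr.
by rewrite lie_brDr act_linl /act der_lin !scalerDr scalerN; zmod_cancel.
Qed.
Lemma sd_br_alt (x : F * L) : sd_br x x = 0.
Proof. by case: x => x1 x2; rewrite /sd_br; cbn [fst snd]; rewrite !lie_br_alt add0r subrr. Qed.
Lemma sd_jacobi (x y z : F * L) :
  sd_br x (sd_br y z) + sd_br y (sd_br z x) + sd_br z (sd_br x y) = 0.
Proof.
case: x y z => [a x] [b y] [c z]; rewrite /sd_br ?pairZ ?pairD; cbn [fst snd].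
congr (_, _); last exact: lie_jacobi.
rewrite -[RHS](lie_jacobi a b c) !act_br /act !(linD (der_lin _)) !(linN (der_lin _)).
rewrite !der_br !brDr !brNr ![lie_br (der _ _) _]brC; zmod_cancel.
Qed.

Definition Semidirect : lieAlgebra K := LieAlgebra sd_brDl sd_brDr sd_br_alt sd_jacobi.

Lemma sd_brE (a b : F) (x y : L) :
  lie_br ((a, x) : Semidirect) (b, y) = (lie_br a b + act x b - act y a, lie_br x y).
Proof. by []. Qed.

Lemma sd_snd_hom : lie_hom (snd : Semidirect -> L).
Proof. by []. Qed.

End SemidirectProduct.

Section Triangles.
Variables (T : finType) (E : {set {set T}}).

Lemma triangle_swap a b c : is_triangle E a b c -> is_triangle E b a c.
Proof.
case=> p [q [r [/and3P [pq qr rp] [-> [-> [-> [aE [bE cE]]]]]]]].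
exists r, q, p; rewrite [r == q]eq_sym qr [q == p]eq_sym pq [p == r]eq_sym rp.
by do !split => //; rewrite setUC.
Qed.

Lemma triangle_rot a b c : is_triangle E a b c -> is_triangle E b c a.
Proof.
case=> p [q [r [/and3P [pq qr rp] [-> [-> [-> [aE [bE cE]]]]]]]].
by exists q, r, p; rewrite qr rp pq.
Qed.

Lemma triangle_sub (E' : {set {set T}}) a b c :
  E' \subset E -> is_triangle E' a b c -> is_triangle E a b c.
Proof.
move=> /subsetP sE'; case=> p [q [r [pqr [-> [-> [-> [aE [bE cE]]]]]]]].
by exists p, q, r; do !split => //; apply: sE'.
Qed.

End Triangles.

Section Star.
Variables (T : finType) (E : {set {set T}}) (v : T).
Hypothesis hE : forall e, e \in E -> #|e| = 2%N.
Hypothesis hK : link_complete E v.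

Local Notation V := (incident E v).
Local Notation E2 := (E :\: incident E v).
Local Notation N := (neighbours E v).

Lemma in_neighbours w : (w \in N) = ([set v; w] \in E).
Proof. by rewrite inE. Qed.

Lemma in_incident e : (e \in V) = (e \in E) && (v \in e).
Proof. by rewrite inE. Qed.

Lemma in_E2 e : (e \in E2) = (e \in E) && (v \notin e).
Proof. by rewrite !inE andbC; case: (e \in E). Qed.

Lemma edge_other e x : e \in E -> x \in e -> exists2 y, y != x & e = [set x; y].
Proof.
move=> /hE/eqP/cards2P [p [q [pq ->]]]; rewrite !inE => /orP [] /eqP ->.
  by exists q; rewrite // eq_sym.
by exists p; rewrite // setUC.
Qed.

Lemma notin_neighbours : v \notin N.
Proof. by rewrite in_neighbours setUid; apply/negP => /hE; rewrite cards1. Qed.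

Lemma neighbour_neq w : w \in N -> w != v.
Proof. by apply: contraTneq => ->; apply: notin_neighbours. Qed.

Lemma incidentP e : e \in V -> exists2 w, w \in N & e = [set v; w].
Proof.
rewrite in_incident => /andP [eE ve]; have [w _ ew] := edge_other eE ve.
by exists w; rewrite // in_neighbours -ew.
Qed.

Lemma incident_set2 w : w \in N -> [set v; w] \in V.
Proof. by move=> wN; rewrite in_incident -in_neighbours wN !inE eqxx. Qed.

Lemma link_edge w u : w \in N -> u \in N -> w != u -> [set w; u] \in E2.
Proof.
move=> wN uN wu; have := hK wN uN wu; rewrite inE in_E2 => /andP [-> _] /=.
by rewrite !inE negb_or ![v == _]eq_sym !neighbour_neq.
Qed.

Lemma star_triangle w u : w \in N -> u \in N -> w != u ->
  is_triangle E [set v; w] [set w; u] [set u; v].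
Proof.
move=> wN uN wu; exists v, w, u.
rewrite eq_sym neighbour_neq // wu neighbour_neq //.
do !split; rewrite -?in_neighbours 1?setUC -?in_neighbours //.
by apply: (subsetP (subsetDl E V)); rewrite setUC link_edge.
Qed.

Lemma link_triangle a b x : a \in E2 -> b \in E2 -> a \subset N -> b \subset N ->
  a != b -> x \in a -> x \in b -> exists c, is_triangle E2 a b c.
Proof.
move=> aE2 bE2 aN bN ab xa xb.
have [y yx ea] := edge_other (subsetP (subsetDl _ _) _ aE2) xa.
have [z zx eb] := edge_other (subsetP (subsetDl _ _) _ bE2) xb.
have yN : y \in N by apply: (subsetP aN); rewrite ea set22.
have zN : z \in N by apply: (subsetP bN); rewrite eb set22.
have yz : y != z by apply: contraNneq ab => yz; rewrite ea eb yz.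
exists [set z; y], y, x, z; rewrite yx eq_sym zx eq_sym yz.
by do !split; rewrite ?link_edge // 1?setUC // eq_sym.
Qed.

Lemma triangle_E2 a b c : a \in E2 -> b \in E2 -> is_triangle E a b c -> is_triangle E2 a b c.
Proof.
move=> aE2 bE2 [p [q [r [pqr [ea [eb [ec [aE [bE cE]]]]]]]]].
exists p, q, r; do !split => //; rewrite in_E2 cE ec !inE negb_or.
move: aE2 bE2; rewrite !in_E2 ea eb !inE !negb_or.
by move=> /andP [_ /andP [-> _]] /andP [_ /andP [_ ->]].
Qed.

Lemma triangle_through_v e w c : e \in E2 -> is_triangle E e [set v; w] c ->
  [/\ w \in e, e \subset N & w \in N].
Proof.
rewrite in_E2 => /andP [_ ve] [p [q [r [/and3P [pq qr rp] [ee [eb [ec [_ [bE cE]]]]]]]]].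
have qe : q \in e by rewrite ee set22.
have qw : q = w.
  by move: (set21 q r); rewrite -eb !inE => /orP [] /eqP // qv; move: ve; rewrite -qv qe.
have rv : r = v.
  move: (set22 q r); rewrite -eb !inE => /orP [] /eqP // rw.
  by move: qr; rewrite qw rw eqxx.
have wN : w \in N by rewrite in_neighbours.
have pN : p \in N by rewrite in_neighbours -rv -ec.
split=> //; first by rewrite -qw.
by rewrite ee subUset !sub1set pN qw wN.
Qed.

End Star.

Section EdgeDerivations.
Variables (K : fieldType) (T : finType) (E : {set {set T}}) (v : T).
Hypothesis hE : forall e, e \in E -> #|e| = 2%N.
Hypothesis hK : link_complete E v.

Local Notation V := (incident E v).
Local Notation E2 := (E :\: incident E v).
Local Notation N := (neighbours E v).
Local Notation F := (FreeLie K T).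
Local Notation X := (@free_gen K T).

Definition nbr_sum (e : {set T}) : F := \sum_(u in e :&: N) X u.

(* [edge_der e] mirrors [ad (x_e)] on the generators [x_vw]: for [e = {p, q}]
   in the link it maps [X p] to [[X p, X q]] and [X q] to [[X q, X p]]. *)
Definition edge_der (e : {set T}) : {ffun T -> F} :=
  [ffun w => if w \in e :&: N then lie_br (X w) (nbr_sum e) else 0].

Lemma nbr_sum_link p q : p != q -> p \in N -> q \in N -> nbr_sum [set p; q] = X p + X q.
Proof.
move=> pq pN qN; rewrite /nbr_sum (setIidPl _) ?subUset ?sub1set ?pN ?qN //.
by rewrite big_setU1 ?big_set1 //= inE.
Qed.

Lemma nbr_sum1 p q : p \in N -> q \notin N -> nbr_sum [set p; q] = X p.
Proof.
move=> pN qN; rewrite /nbr_sum.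
suff -> : [set p; q] :&: N = [set p] by rewrite big_set1.
apply/setP => x; rewrite in_setI in_set2 in_set1; have [-> | _] //= := eqVneq x p.
by have [-> |] //= := eqVneq x q; rewrite (negbTE qN).
Qed.

Lemma nbr_sum_incident w : w \in N -> nbr_sum [set v; w] = X w.
Proof. by move=> wN; rewrite setUC nbr_sum1 // notin_neighbours. Qed.

Lemma edge_der_in (e : {set T}) w : w \in e :&: N -> edge_der e w = lie_br (X w) (nbr_sum e).
Proof. by rewrite ffunE => ->. Qed.

Lemma edge_der_link p q : p != q -> p \in N -> q \in N ->
  edge_der [set p; q] p = lie_br (X p) (X q).
Proof.
move=> pq pN qN; rewrite edge_der_in ?in_setI ?set21 //.
by rewrite nbr_sum_link // brDr lie_br_alt add0r.
Qed.

Lemma edge_der_out (e : {set T}) w : w \notin e :&: N -> edge_der e w = 0.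
Proof. by rewrite ffunE => /negbTE ->. Qed.

Lemma edge_der_notin (e : {set T}) w : w \notin e -> edge_der e w = 0.
Proof. by move=> we; rewrite edge_der_out // inE negb_and we. Qed.

Lemma edge_der_nonlink (e : {set T}) : e \in E -> ~~ (e \subset N) -> edge_der e = 0.
Proof.
move=> eE eN; apply/ffunP => w; rewrite !ffunE; case: ifP => // /setIP [we wN].
have [u _ ewu] := edge_other hE eE we.
have uN : u \notin N by apply: contra eN => uN; rewrite ewu subUset !sub1set wN uN.
by rewrite ewu nbr_sum1 // lie_br_alt.
Qed.

Lemma der_edge_der_disjoint (a b : {set T}) w : {in b :&: N, forall x, x \notin a} ->
  der (edge_der a) (edge_der b w) = 0.
Proof.
move=> ab; rewrite ffunE; case: ifP => [wbN | _]; last exact: (lin0 (der_lin _)).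
have ab' : {in b :&: N, forall x, edge_der a x = 0}.
  by move=> x /[dup] /ab xa /setIP [_ xN]; rewrite edge_der_out // inE negb_and xa.
rewrite der_br der_gen ab' // br0l addr0 /nbr_sum.
rewrite (big_morph (der (edge_der a)) (linD (der_lin _)) (lin0 (der_lin _))).
by rewrite big1 ?br0r // => x xbN; rewrite der_gen ab'.
Qed.

Lemma edge_der_comm (a b : {set T}) : a \in E2 -> b \in E2 -> a != b ->
  ~ (exists c, is_triangle E2 a b c) -> der_comm (edge_der a) (edge_der b) = 0.
Proof.
move=> aE2 bE2 ab no_tri.
have [aN|aN] := boolP (a \subset N); last first.
  by rewrite edge_der_nonlink ?der_comm0l // (subsetP (subsetDl E V)).
have [bN|bN] := boolP (b \subset N); last first.
  by rewrite (edge_der_nonlink _ bN) ?der_comm0r // (subsetP (subsetDl E V)).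
have disj x : x \in a -> x \in b -> False.
  by move=> xa xb; apply: no_tri; apply: (link_triangle hE hK aE2 bE2 aN bN ab xa xb).
apply/ffunP => w; rewrite ffunE !der_edge_der_disjoint ?subrr ?ffunE // => x /setIP [x_in _].
  by apply/negP => /disj; apply.
by apply/negP => /disj /(_ x_in).
Qed.

Lemma edge_der_triangle_at p q r : p != q -> q != r -> r != p ->
  p \in N -> q \in N -> r \in N ->
  let a := edge_der [set p; q] in let b := edge_der [set q; r] in
  let c := edge_der [set r; p] in
  der_comm a b p = der_comm b c p /\ der_comm b c p = der_comm c a p.
Proof.
move=> pq qr rp pN qN rN a b c.
have ap : a p = lie_br (X p) (X q) by rewrite edge_der_link.
have bq : b q = lie_br (X q) (X r) by rewrite edge_der_link.
have br : b r = lie_br (X r) (X q) by rewrite /b setUC edge_der_link // eq_sym.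
have cp : c p = lie_br (X p) (X r) by rewrite /c setUC edge_der_link // eq_sym.
have bp : b p = 0 by rewrite edge_der_notin // !inE negb_or pq eq_sym rp.
have ar : a r = 0 by rewrite edge_der_notin // !inE negb_or rp eq_sym qr.
have cq : c q = 0 by rewrite edge_der_notin // !inE negb_or qr eq_sym pq.
rewrite !der_commE ap bp cp !(lin0 (der_lin _)) !der_br !der_gen.
rewrite ap bq br cp ar cq bp !br0l !br0r.
split; first by rewrite [lie_br (X r) (X q)]brC brNr; zmod_cancel.
by rewrite br_leibniz [lie_br (X r) (lie_br _ _)]brC; zmod_cancel.
Qed.

Lemma edge_der_triangle (a b c : {set T}) : is_triangle E2 a b c ->
  der_comm (edge_der a) (edge_der b) = der_comm (edge_der b) (edge_der c) /\
  der_comm (edge_der b) (edge_der c) = der_comm (edge_der c) (edge_der a).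
Proof.
case=> p [q [r [/and3P [pq qr rp] [-> [-> [-> [aE [bE cE]]]]]]]].
have D0 x y : [set x; y] \in E2 -> (x \notin N) || (y \notin N) -> edge_der [set x; y] = 0.
  move=> xyE xyN; apply: edge_der_nonlink; first exact: (subsetP (subsetDl E V)).
  by rewrite subUset !sub1set negb_and.
have [pN|pN] := boolP (p \in N); last first.
  by rewrite (D0 p q) ?(D0 r p) ?pN ?orbT // !der_comm0l !der_comm0r.
have [qN|qN] := boolP (q \in N); last first.
  by rewrite (D0 p q) ?(D0 q r) ?qN ?orbT // !der_comm0l !der_comm0r.
have [rN|rN] := boolP (r \in N); last first.
  by rewrite (D0 q r) ?(D0 r p) ?rN ?orbT // !der_comm0l !der_comm0r.
suff pointwise w :
    der_comm (edge_der [set p; q]) (edge_der [set q; r]) w =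
      der_comm (edge_der [set q; r]) (edge_der [set r; p]) w /\
    der_comm (edge_der [set q; r]) (edge_der [set r; p]) w =
      der_comm (edge_der [set r; p]) (edge_der [set p; q]) w.
  by split; apply/ffunP => w; case: (pointwise w).
have [-> | wp] := eqVneq w p; first exact: edge_der_triangle_at.
have [-> | wq] := eqVneq w q.
  by have [h1 h2] := edge_der_triangle_at qr rp pq qN rN pN; rewrite h1 h2.
have [-> | wr] := eqVneq w r.
  by have [h1 h2] := edge_der_triangle_at rp pq qr rN pN qN; rewrite -h2 h1.
by rewrite !der_commE !edge_der_notin ?(lin0 (der_lin _)) ?subrr // !inE negb_or ?wp ?wq ?wr.
Qed.

Lemma edge_der_holonomy : holonomy_rel E2 (edge_der : {set T} -> DerLie K T).
Proof.
by split=> [a b aE2 bE2 ab no_tri | a b c]; [apply: edge_der_comm | apply: edge_der_triangle].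
Qed.

End EdgeDerivations.

Section Kernel.
Variables (K : fieldType) (T : finType) (E : {set {set T}}) (v : T).
Hypothesis hE : forall e, e \in E -> #|e| = 2%N.
Hypothesis hK : link_complete E v.

Local Notation V := (incident E v).
Local Notation E2 := (E :\: incident E v).
Local Notation N := (neighbours E v).
Local Notation F := (FreeLie K T).
Local Notation X := (@free_gen K T).
Local Notation edge_der := (@edge_der K T E v).
Local Notation nbr_sum := (@nbr_sum K T E v).

Variables (LG LG2 : lieAlgebra K) (iota : {set T} -> LG) (iota2 : {set T} -> LG2).
Hypotheses (hLG : is_holonomy E iota) (hLG2 : is_holonomy E2 iota2).

Lemma holonomy_rel_E2 : holonomy_rel E2 iota.
Proof.
have sE2 := subsetDl E V; split=> [a b aE2 bE2 ab no_tri | a b c tri].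
  apply: hLG.1.1 => //; try exact: (subsetP sE2).
  by move=> [c /(triangle_E2 aE2 bE2) tri]; apply: no_tri; exists c.
exact: hLG.1.2 (triangle_sub sE2 tri).
Qed.

Definition star_gen (w : T) : LG := if w \in N then iota [set v; w] else 0.
Definition star_eval : F -> LG := free_eval star_gen.

Lemma star_eval_hom : lie_hom star_eval. Proof. exact: free_eval_hom. Qed.
Lemma star_eval_lin : linear star_eval. Proof. exact: star_eval_hom.1. Qed.
Lemma star_eval_gen w : star_eval (X w) = star_gen w. Proof. exact: free_eval_gen. Qed.

Lemma star_eval_edge_der e w : e \in E2 ->
  star_eval (edge_der e w) = lie_br (iota e) (star_eval (X w)).
Proof.
move=> eE2; have /andP [eE ve] : (e \in E) && (v \notin e) by rewrite -in_E2.
rewrite star_eval_gen /star_gen; have [wN | wN] := boolP (w \in N); last first.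
  by rewrite edge_der_out ?(lin0 star_eval_lin) ?br0r // inE negb_and wN orbT.
have comm : ~ (exists c, is_triangle E e [set v; w] c) -> lie_br (iota e) (iota [set v; w]) = 0.
  move=> no_tri; apply: hLG.1.1 => //; first by rewrite -in_neighbours.
  by apply: contraNneq ve => ->; rewrite set21.
have [we | we] := boolP (w \in e); last first.
  rewrite edge_der_notin // (lin0 star_eval_lin) comm // => -[c].
  by case/(triangle_through_v eE2) => w_in; rewrite w_in in we.
have [u uw ewu] := edge_other hE eE we.
have [uN | uN] := boolP (u \in N); last first.
  rewrite edge_der_in ?in_setI ?we // [X in nbr_sum X]ewu nbr_sum1 // lie_br_alt.
  rewrite (lin0 star_eval_lin) comm // => -[c].
  by case/(triangle_through_v eE2) => _; rewrite ewu subUset !sub1set (negbTE uN) andbF.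
have wu : w != u by rewrite eq_sym.
have [ab bc] := hLG.1.2 _ _ _ (star_triangle hE hK wN uN wu).
rewrite ewu edge_der_link // star_eval_hom.2 !star_eval_gen /star_gen wN uN.
by rewrite brC (setUC [set v] [set u]) -bc -ab -brC.
Qed.

Lemma star_eval_der e b : e \in E2 ->
  star_eval (der (edge_der e) b) = lie_br (iota e) (star_eval b).
Proof.
move=> eE2; elim/free_lie_ind: b => [|a x y ex ey|x y ex ey|w].
- by rewrite !(lin0 (der_lin _)) (lin0 star_eval_lin) br0r.
- by rewrite der_lin !star_eval_lin ex ey lie_brDr.
- by rewrite der_br (linD star_eval_lin) !star_eval_hom.2 ex ey [RHS]br_leibniz addrC.
- by rewrite der_gen star_eval_edge_der.
Qed.

Variables (rho : LG2 -> DerLie K T) (s : LG2 -> LG).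
Hypotheses (rho_hom : lie_hom rho) (rho_gen : {in E2, forall e, rho (iota2 e) = edge_der e}).
Hypotheses (s_hom : lie_hom s) (s_gen : {in E2, forall e, s (iota2 e) = iota e}).

Local Notation SD := (Semidirect rho_hom).

Lemma star_eval_act x b : star_eval (act rho x b) = lie_br (s x) (star_eval b).
Proof.
elim/(holonomy_ind hLG2): x b => [b | a x y ex ey b | x y ex ey b | e eE2 b].
- by rewrite /act (lie_hom0 rho_hom) der0 (lin0 star_eval_lin) (lie_hom0 s_hom) br0l.
- by rewrite act_linl // star_eval_lin ex ey s_hom.1 lie_brDl.
- by rewrite act_br // (linB star_eval_lin) !ex !ey ex s_hom.2 br_leibniz addrK.
- by rewrite /act rho_gen // star_eval_der // s_gen.
Qed.

Definition retract (p : SD) : LG := star_eval p.1 + s p.2.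

Lemma retract_hom : lie_hom retract.
Proof.
split=> [a [x1 x2] [y1 y2] | [x1 x2] [y1 y2]].
  by rewrite /retract pairZ pairD /= star_eval_lin s_hom.1 scalerDr; zmod_cancel.
rewrite /retract sd_brE /= (linB star_eval_lin) (linD star_eval_lin) !star_eval_act.
by rewrite star_eval_hom.2 s_hom.2 !brDl !brDr [lie_br (s y2) _]brC; zmod_cancel.
Qed.

Definition lift (e : {set T}) : SD := if e \in V then (nbr_sum e, 0) else (0, iota2 e).

Lemma lift_incident w : w \in N -> lift [set v; w] = (X w, 0).
Proof. by move=> wN; rewrite /lift incident_set2 // nbr_sum_incident. Qed.

Lemma lift_E2 e : e \in E2 -> lift e = (0, iota2 e).
Proof. by rewrite /lift in_setD => /andP [/negbTE ->]. Qed.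

Lemma act0l b : act rho 0 b = 0.
Proof. by rewrite /act (lie_hom0 rho_hom) der0. Qed.

Lemma act0r x : act rho x 0 = 0.
Proof. exact: (lin0 (der_lin _)). Qed.

Lemma act_gen e w : e \in E2 -> act rho (iota2 e) (X w) = edge_der e w.
Proof. by move=> eE2; rewrite /act rho_gen // der_gen. Qed.

Lemma lift_comm_incident w b : w \in N -> b \in E2 ->
  ~ (exists c, is_triangle E [set v; w] b c) -> lie_br (lift [set v; w]) (lift b) = 0.
Proof.
move=> wN bE2 no_tri; rewrite lift_incident // lift_E2 // sd_brE act_gen // act0l.
rewrite br0r br0l add0r sub0r; suff -> : edge_der b w = 0 by rewrite oppr0.
have bE := subsetP (subsetDl _ _) _ bE2.
have [bN | bN] := boolP (b \subset N); last by rewrite edge_der_nonlink ?ffunE.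
have [wb | wb] := boolP (w \in b); last exact: edge_der_notin.
have [u uw ewu] := edge_other hE bE wb.
have uN : u \in N by apply: (subsetP bN); rewrite ewu set22.
by case: no_tri; exists [set u; v]; rewrite ewu; apply: star_triangle; rewrite // eq_sym.
Qed.

Lemma lift_comm a b : a \in E -> b \in E -> a != b ->
  ~ (exists c, is_triangle E a b c) -> lie_br (lift a) (lift b) = 0.
Proof.
move=> aE bE ab no_tri.
have [aV | aV] := boolP (a \in V); have [bV | bV] := boolP (b \in V).
- have [w1 w1N ea] := incidentP hE aV; have [w2 w2N eb] := incidentP hE bV.
  have w21 : w2 != w1 by apply: contraNneq ab => e21; rewrite ea eb e21.
  case: no_tri; exists [set w2; w1]; rewrite ea eb (setUC [set v]).
  by do 2 apply: triangle_rot; apply: star_triangle.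
- have [w wN ea] := incidentP hE aV; subst a.
  by apply: lift_comm_incident; rewrite // in_setD bV.
- have [w wN eb] := incidentP hE bV; subst b.
  rewrite brC lift_comm_incident ?oppr0 // ?in_setD ?aV //.
  by move=> [c /triangle_swap tri]; apply: no_tri; exists c.
- have aE2 : a \in E2 by rewrite in_setD aV.
  have bE2 : b \in E2 by rewrite in_setD bV.
  rewrite !lift_E2 // sd_brE !act0r br0l subr0 addr0 hLG2.1.1 //.
  by move=> [c /(triangle_sub (subsetDl E V)) tri]; apply: no_tri; exists c.
Qed.

Definition triangle_rel (x : {set T} -> SD) (a b c : {set T}) : Prop :=
  lie_br (x a) (x b) = lie_br (x b) (x c) /\ lie_br (x b) (x c) = lie_br (x c) (x a).

Lemma triangle_rel_rot x a b c : triangle_rel x b c a -> triangle_rel x a b c.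
Proof. by case=> h1 h2; split; rewrite ?h1 ?h2. Qed.

Lemma lift_star_triangle q r : q \in N -> r \in N -> q != r ->
  triangle_rel lift [set v; q] [set q; r] [set r; v].
Proof.
move=> qN rN qr; have qrE2 := link_edge hE hK qN rN qr.
rewrite /triangle_rel (setUC [set r]) !lift_incident // lift_E2 // !sd_brE !act_gen //.
have Dr : edge_der [set q; r] r = lie_br (X r) (X q) by rewrite setUC edge_der_link // eq_sym.
rewrite !act0l !br0l !br0r edge_der_link // Dr [lie_br (X q) (X r)]brC.
by split; congr (_, _); zmod_cancel.
Qed.

Lemma lift_triangle a b c : is_triangle E a b c -> triangle_rel lift a b c.
Proof.
case=> p [q [r [/and3P [pq qr rp] [-> [-> [-> [aE [bE cE]]]]]]]].
have [vp | vp] := eqVneq v p.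
  by rewrite -vp in aE cE *; apply: lift_star_triangle; rewrite // in_neighbours // setUC.
have [vq | vq] := eqVneq v q.
  rewrite -vq in aE bE *; apply: triangle_rel_rot.
  by apply: lift_star_triangle; rewrite // in_neighbours // setUC.
have [vr | vr] := eqVneq v r.
  rewrite -vr in bE cE *; do 2 apply: triangle_rel_rot.
  by apply: lift_star_triangle; rewrite // in_neighbours // setUC.
have E2_of x y : [set x; y] \in E -> v != x -> v != y -> [set x; y] \in E2.
  by move=> xyE vx vy; rewrite in_E2 xyE !inE negb_or vx vy.
have aE2 := E2_of _ _ aE vp vq; have bE2 := E2_of _ _ bE vq vr.
have cE2 := E2_of _ _ cE vr vp.
rewrite /triangle_rel !lift_E2 // !sd_brE !act0r !br0l !subr0 !addr0.
have tri2 : is_triangle E2 [set p; q] [set q; r] [set r; p] by exists p, q, r; rewrite pq qr rp.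
by have [-> ->] := hLG2.1.2 _ _ _ tri2.
Qed.

Lemma lift_holonomy : holonomy_rel E lift.
Proof. by split=> [a b aE bE ab no_tri | a b c /lift_triangle]; first exact: lift_comm. Qed.

Variables (phi : LG -> SD) (phi_hom : lie_hom phi).
Hypothesis phi_gen : {in E, forall e, phi (iota e) = lift e}.

Lemma retract_phi y : retract (phi y) = y.
Proof.
apply: (holonomy_hom_eq hLG (lie_hom_comp phi_hom retract_hom)) => // e eE.
rewrite phi_gen //; have [eV | eV] := boolP (e \in V).
  have [w wN ->] := incidentP hE eV.
  by rewrite lift_incident // /retract star_eval_gen /star_gen wN (lie_hom0 s_hom) addr0.
by rewrite lift_E2 ?in_setD ?eV // /retract (lin0 star_eval_lin) add0r s_gen // in_setD eV.
Qed.

Variables (pi : LG -> LG2) (pi_hom : lie_hom pi).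
Hypotheses (pi_V : {in V, forall e, pi (iota e) = 0})
  (pi_E2 : {in E2, forall e, pi (iota e) = iota2 e}).

Lemma phi_snd y : (phi y).2 = pi y.
Proof.
apply: (holonomy_hom_eq hLG (lie_hom_comp phi_hom (sd_snd_hom rho_hom)) pi_hom) => e eE.
rewrite phi_gen //; have [eV | eV] := boolP (e \in V).
  by have [w wN ew] := incidentP hE eV; rewrite pi_V // ew lift_incident.
have eE2 : e \in E2 by rewrite in_setD eV.
by rewrite lift_E2 // pi_E2.
Qed.

Lemma kernel_star_eval y : pi y = 0 -> y = star_eval (phi y).1.
Proof. by move=> py; rewrite -{1}(retract_phi y) /retract phi_snd py (lie_hom0 s_hom) addr0. Qed.

Lemma star_eval_kernel b : pi (star_eval b) = 0.
Proof.
have [pi0 pi_lin pi_br] := lie_hom_kernel pi_hom.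
elim/free_lie_ind: b => [|a x y ex ey|x y ex ey|w].
- by rewrite (lin0 star_eval_lin).
- by rewrite star_eval_lin pi_lin.
- by rewrite star_eval_hom.2 pi_br.
- by rewrite star_eval_gen /star_gen; case: ifP => // /incident_set2 /pi_V.
Qed.

Lemma phi_fst_br y z : pi y = 0 -> pi z = 0 -> (phi (lie_br y z)).1 = lie_br (phi y).1 (phi z).1.
Proof.
move=> py pz; rewrite phi_hom.2; move: (phi_snd y) (phi_snd z); rewrite py pz.
case: (phi y) (phi z) => [a x] [b x']; rewrite sd_brE /= => -> ->.
by rewrite !act0l subr0 addr0.
Qed.

Lemma kernel_free_on : free_on (fun y => pi y = 0) V iota.
Proof.
have [pi0 pi_lin pi_br] := lie_hom_kernel pi_hom.
split=> // M f; pose g := free_eval (fun w => f [set v; w]).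
have [g_lin g_br] := free_eval_hom (fun w => f [set v; w]).
have h_hom : lie_hom_on (fun y => pi y = 0) (fun y => g (phi y).1).
  move=> a y z py pz; split; last by rewrite phi_fst_br // g_br.
  by rewrite phi_hom.1 -g_lin.
exists (fun y => g (phi y).1); split=> // [e eV | h' h'_hom h'_gen y py].
  have [w wN ->] := incidentP hE eV; have vwE : [set v; w] \in E by rewrite -in_neighbours.
  by rewrite phi_gen // lift_incident //= /g free_eval_gen.
have h'j := lie_hom_on_comp star_eval_hom star_eval_kernel h'_hom.
have hj := lie_hom_on_comp star_eval_hom star_eval_kernel h_hom.
rewrite (kernel_star_eval py); move: (phi y).1; apply: free_hom_eq => // w.
rewrite star_eval_gen /star_gen; case: ifP => [wN | _]; last first.
  by move: (lie_hom0 h'j) (lie_hom0 hj) => /=; rewrite (lin0 star_eval_lin) => -> ->.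
have vwE : [set v; w] \in E by rewrite -in_neighbours.
by rewrite h'_gen ?incident_set2 // phi_gen // lift_incident //= /g free_eval_gen.
Qed.

End Kernel.

Theorem mainTheorem4 (K : fieldType) (T : finType) (E : {set {set T}})
    (hE : forall e, e \in E -> #|e| = 2%N) (v : T)
    (LG LG2 : lieAlgebra K) (iota : {set T} -> LG) (iota2 : {set T} -> LG2)
    (hLG : is_holonomy E iota)
    (hLG2 : is_holonomy (E :\: incident E v) iota2)
    (pi : LG -> LG2) (hpi : lie_hom pi)
    (hpiV : forall e, e \in incident E v -> pi (iota e) = 0)
    (hpiE : forall e, e \in E :\: incident E v -> pi (iota e) = iota2 e)
    (hK : link_complete E v) :
  free_on (fun x : LG => pi x = 0) (incident E v) iota.
Proof.
have [rho [rho_hom rho_gen _]] := hLG2.2 _ _ (edge_der_holonomy K hE hK).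
have [s [s_hom s_gen _]] := hLG2.2 _ _ (holonomy_rel_E2 v hLG).
have [phi [phi_hom phi_gen _]] := hLG.2 _ _ (lift_holonomy hE hK hLG2 rho_hom rho_gen).
exact: (kernel_free_on hE hK hLG hLG2 rho_gen s_hom s_gen phi_hom phi_gen hpi hpiV hpiE).
Qed.
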